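(* Let $(\mathcal{A},\mathbf{m})$ be a multiarrangement in $\mathbb{Q}^l$ with $\mathcal{A}=\{H_1,\dots,H_n\}$, $H_i=\alpha_i^{-1}(0)$, where the $\alpha_i\in\mathbb{Z}[x_1,\dots,x_l]$ are linear forms such that no prime number divides any $\alpha_i$. If $(\mathcal{A},\mathbf{m})$ is free with exponents $(e_1,\dots,e_l)$, then for all good primes $p$ except possibly finitely many, the multiarrangement $(\mathcal{A}_p,\mathbf{m})$ in $\mathbb{F}_p^l$ is free with exponents $(e_1,\dots,e_l)$.
   Context: Let $\mathbb{K}$ be a field and $S=\mathbb{K}[x_1,\dots,x_l]$. A multiarrangement $(\mathcal{A},\mathbf{m})$ in $\mathbb{K}^l$ is a finite set $\mathcal{A}=\{H_1,\dots,H_n\}$ of distinct linear hyperplanes $H_i=\alpha_i^{-1}(0)$ ($\alpha_i$ linear forms) together with a map $\mathbf{m}\colon\mathcal{A}\to\mathbb{Z}_{\ge0}$; set $Q(\mathcal{A},\mathbf{m})=\prod_i\alpha_i^{\mathbf{m}(H_i)}$ and $|\mathbf{m}|=\sum_i\mathbf{m}(H_i)$. Its module of logarithmic derivations is $D(\mathcal{A},\mathbf{m})=\{\delta=\sum_j f_j\partial_{x_j}: f_j\in S,\ \delta(\alpha_i)\in\alpha_i^{\mathbf{m}(H_i)}S\ \forall i\}$. A derivation $\sum_j f_j\partial_{x_j}$ is homogeneous of polynomial degree $d$ if all $f_j$ are homogeneous of degree $d$. $(\mathcal{A},\mathbf{m})$ is free with exponents $(e_1,\dots,e_l)$ if $D(\mathcal{A},\mathbf{m})$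 is a free $S$-module with a basis of homogeneous derivations of polynomial degrees $e_1,\dots,e_l$. For a prime $p$, $\pi_p\colon\mathbb{Z}[x_1,\dots,x_l]\to\mathbb{F}_p[x_1,\dots,x_l]$ is reduction mod $p$; $p$ is good for $(\mathcal{A},\mathbf{m})$ if $\pi_p(\alpha_i)\ne\pi_p(\alpha_j)$ for all $i\ne j$. For a good prime $p$, $(\mathcal{A}_p,\mathbf{m})$ is the multiarrangement in $\mathbb{F}_p^l$ with hyperplanes $\pi_p(\alpha_i)^{-1}(0)$, each carrying multiplicity $\mathbf{m}(H_i)$, so $Q(\mathcal{A}_p,\mathbf{m})=\pi_p(Q(\mathcal{A},\mathbf{m}))$. *)

From HB Require Import structures.
From mathcomp Require Import all_boot all_order all_algebra.
From mathcomp Require Import mpoly.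
Set Implicit Arguments. Unset Strict Implicit. Unset Printing Implicit Defensive.
Import GRing.Theory.
Local Open Scope ring_scope.

Definition linform (K : ringType) (l : nat) (c : 'I_l -> K) : {mpoly K[l]} :=
  \sum_(j < l) c j *: 'X_j.

(* A derivation sum_j f_j d/dx_j is represented by its coefficient family f.
   Its action on a linear form sum_j c_j x_j is sum_j c_j f_j. *)
Definition der_lin (K : ringType) (l : nat) (f : 'I_l -> {mpoly K[l]})
  (c : 'I_l -> K) : {mpoly K[l]} :=
  \sum_(j < l) c j *: f j.

Definition in_logder (K : ringType) (l n : nat) (a : 'I_n -> 'I_l -> K)
  (m : 'I_n -> nat) (f : 'I_l -> {mpoly K[l]}) : Prop :=
  forall i : 'I_n, exists g : {mpoly K[l]},
    der_lin f (a i) = (linform (a i)) ^+ (m i) * g.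

Definition homog_der (K : ringType) (l : nat) (d : nat)
  (f : 'I_l -> {mpoly K[l]}) : Prop :=
  forall j : 'I_l, f j \is d.-homog.

Definition free_with_exponents (K : ringType) (l n : nat)
  (a : 'I_n -> 'I_l -> K) (m : 'I_n -> nat) (e : 'I_l -> nat) : Prop :=
  exists theta : 'I_l -> 'I_l -> {mpoly K[l]},
    (forall k, in_logder a m (theta k)) /\
    (forall k, homog_der (e k) (theta k)) /\
    (forall f : 'I_l -> {mpoly K[l]}, in_logder a m f ->
       exists g : 'I_l -> {mpoly K[l]},
         forall j, f j = \sum_(k < l) g k * theta k j) /\
    (forall g : 'I_l -> {mpoly K[l]},
       (forall j, \sum_(k < l) g k * theta k j = 0) -> forall k, g k = 0).

Definition red_mod (p l : nat) (c : 'I_l -> int) : 'I_l -> 'F_p :=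
  fun j => (c j)%:~R.

Definition good_prime (l n : nat) (a : 'I_n -> 'I_l -> int) (p : nat) : Prop :=
  forall i j : 'I_n, i != j -> red_mod p (a i) <> red_mod p (a j).

From HB Require Import structures.
From mathcomp Require Import all_boot all_order all_algebra.
From mathcomp Require Import mpoly.
From mathcomp Require Import ring zify.
From Stdlib Require Import FunctionalExtensionality.
Set Implicit Arguments. Unset Strict Implicit. Unset Printing Implicit Defensive.
Import GRing.Theory.
Local Open Scope ring_scope.

(* Saito's criterion: derivations theta_1, ..., theta_l in D(A, m) form a basis
   of D(A, m) iff det (theta_k(x_j)) = u Q(A, m) for a nonzero constant u.
   Over Q this turns the given basis into one with det = u Q; clearing
   denominators gives integer derivations theta_k in D(A, m) with
   d det (theta) = c Q over Z.  For a prime p dividing neither d, c nor the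
   2x2 minors witnessing that the alpha_i are pairwise non-proportional, all
   of this survives reduction mod p, and Saito's criterion over F_p gives
   freeness with the same exponents. *)

Definition divides (R : comPzRingType) (d x : R) : Prop := exists q, x = d * q.

Definition eqmod (R : comPzRingType) (d x y : R) : Prop := divides d (x - y).

Section Congruence.
Variables (R : comPzRingType) (d : R).

Lemma eqmod_refl x : eqmod d x x.
Proof. by exists 0; rewrite subrr mulr0. Qed.

Lemma eqmodD x y x' y' : eqmod d x y -> eqmod d x' y' -> eqmod d (x + x') (y + y').
Proof. by move=> [q xq] [q' xq']; exists (q + q'); rewrite mulrDr -xq -xq'; ring. Qed.

Lemma eqmodM x y x' y' : eqmod d x y -> eqmod d x' y' -> eqmod d (x * x') (y * y').
Proof.
move=> [q xq] [q' xq']; exists (x * q' + q * y').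
have -> : x * x' - y * y' = x * (x' - y') + (x - y) * y' by ring.
by rewrite xq xq'; ring.
Qed.

Lemma eqmodX x y k : eqmod d x y -> eqmod d (x ^+ k) (y ^+ k).
Proof.
move=> xy; elim: k => [|k IHk]; first by rewrite !expr0; apply: eqmod_refl.
by rewrite !exprS; apply: eqmodM.
Qed.

Lemma eqmod_sum (I : Type) (r : seq I) (P : pred I) (F G : I -> R) :
  (forall i, P i -> eqmod d (F i) (G i)) ->
  eqmod d (\sum_(i <- r | P i) F i) (\sum_(i <- r | P i) G i).
Proof. by move=> FG; apply: big_ind2 => //; [apply: eqmod_refl | apply: eqmodD]. Qed.

Lemma eqmod_prod (I : Type) (r : seq I) (P : pred I) (F G : I -> R) :
  (forall i, P i -> eqmod d (F i) (G i)) ->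
  eqmod d (\prod_(i <- r | P i) F i) (\prod_(i <- r | P i) G i).
Proof. by move=> FG; apply: big_ind2 => //; [apply: eqmod_refl | apply: eqmodM]. Qed.

End Congruence.

Lemma eqmod_comp_mpoly (R : comNzRingType) l (d : {mpoly R[l]})
    (lq : l.-tuple {mpoly R[l]}) :
  (forall j, eqmod d 'X_j (tnth lq j)) -> forall p, eqmod d p (p \mPo lq).
Proof.
move=> dX p; rewrite {1}(mpolyE p) comp_mpolyE.
apply: eqmod_sum => mu _; rewrite mpolyXE_id -!mul_mpolyC.
apply: eqmodM; first exact: eqmod_refl.
by apply: eqmod_prod => j _; apply: eqmodX.
Qed.

Definition hyperplane_proj (F : fieldType) l (c : 'I_l -> F) (j0 : 'I_l) :
    l.-tuple {mpoly F[l]} :=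
  [tuple 'X_j - ((j == j0)%:R / c j0) *: linform c | j < l].

Local Notation restr c j0 := (comp_mpoly (hyperplane_proj c j0)).

Section HyperplaneRestriction.
Variables (F : fieldType) (l : nat).
Implicit Types (c b : 'I_l -> F) (p : {mpoly F[l]}).

Lemma mcoeff_linform c j : (linform c)@_U_(j) = c j.
Proof.
rewrite /linform raddf_sum (bigD1 j) //= big1 ?addr0.
  by rewrite mcoeffZ mcoeffXU eqxx mulr1.
by move=> k /negbTE kj; rewrite mcoeffZ mcoeffXU kj mulr0.
Qed.

Lemma linform_neq0 c j : c j != 0 -> linform c != 0.
Proof. by apply: contraNneq => c0; rewrite -mcoeff_linform c0 mcoeff0. Qed.

Lemma restr_linform c b j0 :
  restr c j0 (linform b) = linform (fun j => b j - b j0 / c j0 * c j).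
Proof.
have -> : linform (fun j => b j - b j0 / c j0 * c j) = linform b - (b j0 / c j0) *: linform c.
  by rewrite /linform scaler_sumr -sumrB; apply: eq_bigr => j _; rewrite scalerBl scalerA.
rewrite {1}/linform raddf_sum /=.
under eq_bigr do rewrite comp_mpolyZ comp_mpolyXU -tnth_nth tnth_mktuple scalerBr scalerA.
rewrite sumrB -scaler_suml; congr (_ - _ *: _).
rewrite (bigD1 j0) //= big1 ?addr0; first by rewrite eqxx mul1r.
by move=> j /negbTE ->; rewrite mul0r mulr0.
Qed.

Lemma restr_linform_id c j0 : c j0 != 0 -> restr c j0 (linform c) = 0.
Proof.
move=> cj0; rewrite restr_linform /linform big1 // => j _.
by rewrite divff // mul1r subrr scale0r.
Qed.

Lemma eqmod_restr c j0 p : eqmod (linform c) p (restr c j0 p).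
Proof.
apply: eqmod_comp_mpoly => j; rewrite tnth_mktuple.
exists (((j == j0)%:R / c j0)%:MP).
by rewrite opprB addrC subrK [RHS]mulrC mul_mpolyC.
Qed.

Lemma linform_dvd_restr0 c j0 p : restr c j0 p = 0 -> divides (linform c) p.
Proof. by case: (eqmod_restr c j0 p) => q pq p0; exists q; rewrite -pq p0 subr0. Qed.

Lemma linform_expdvd_cancel c j0 p t E : c j0 != 0 -> restr c j0 p != 0 ->
  divides (linform c ^+ t) (p * E) -> divides (linform c ^+ t) E.
Proof.
move=> cj0 rp0; elim: t E => [|t IHt] E [q pEq]; first by exists E; rewrite mul1r.
have /eqP : restr c j0 p * restr c j0 E = 0.
  by rewrite -rmorphM pEq rmorphM rmorphXn /= restr_linform_id // expr0n mul0r.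
rewrite mulf_eq0 (negbTE rp0) /= => /eqP /linform_dvd_restr0 [E' E_E'].
have [|q' Eq'] := IHt E'.
  exists q; apply: (mulfI (linform_neq0 cj0)).
  by rewrite mulrCA -E_E' pEq exprS mulrA.
by exists q'; rewrite E_E' Eq' exprS mulrA.
Qed.

End HyperplaneRestriction.

Lemma det_expand_pivot (R : comPzRingType) l (T : 'M[R]_l) j0 :
  (forall k, k != j0 -> T j0 k = 0) ->
  (forall i j, T (lift j0 i) (lift j0 j) = (i == j)%:R) -> \det T = T j0 j0.
Proof.
move=> row0 minor1; rewrite (expand_det_row T j0) (bigD1 j0) //= big1 ?addr0.
  rewrite /cofactor; have -> : row' j0 (col' j0 T) = 1%:M.
    by apply/matrixP => i j; rewrite !mxE minor1.
  by rewrite det1 mulr1 addnn -signr_odd odd_double expr0 mulr1.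
by move=> k /row0 ->; rewrite mul0r.
Qed.

Lemma rows_indep_of_det_neq0 (R : idomainType) l (M : 'M[R]_l) (g : 'I_l -> R) :
  \det M != 0 -> (forall j, \sum_k g k * M k j = 0) -> forall k, g k = 0.
Proof.
move=> detM0 gM0 k.
have gM : \row_k g k *m M = 0.
  by apply/matrixP => i j; rewrite !mxE -[RHS](gM0 j); apply: eq_bigr => r _; rewrite mxE.
have /matrixP/(_ 0 k) := congr1 (mulmx^~ (\adj M)) gM.
rewrite -mulmxA mul_mx_adj mul0mx mul_mx_scalar !mxE => /eqP.
by rewrite mulf_eq0 (negbTE detM0) => /eqP.
Qed.

(* Replacing column j0 of M by sum_j c_j (column j) multiplies the determinant
   by c_j0, and makes that column divisible by (linform c)^t. *)
Lemma linform_expdvd_det (F : fieldType) l (c : 'I_l -> F) j0 t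
    (M : 'M[{mpoly F[l]}]_l) : c j0 != 0 ->
  (forall k, divides (linform c ^+ t) (der_lin (fun j => M k j) c)) ->
  divides (linform c ^+ t) (\det M).
Proof.
move=> cj0 /fin_all_exists [g Mg].
pose T : 'M[{mpoly F[l]}]_l := \matrix_(j, k) (if k == j0 then (c j)%:MP else (j == k)%:R).
pose N := \matrix_(k, j) (if j == j0 then g k else M k j).
pose D := diag_mx (\row_j (if j == j0 then linform c ^+ t else 1)).
have detT : \det T = (c j0)%:MP.
  rewrite (det_expand_pivot (j0 := j0)) ?mxE ?eqxx // => [k /negbTE kj0 | i j].
    by rewrite mxE kj0 eq_sym kj0.
  by rewrite mxE eq_sym (negbTE (neq_lift _ _)) (inj_eq lift_inj).
have detD : \det D = linform c ^+ t.
  rewrite det_diag (bigD1 j0) //= big1 ?mulr1 => [|j /negbTE jj0]; rewrite mxE ?eqxx //.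
  by rewrite jj0.
have MT : M *m T = N *m D.
  rewrite mul_mx_diag; apply/matrixP => k j; rewrite !mxE.
  case: ifP => [/eqP -> | jj0].
    rewrite mulrC -Mg; apply: eq_bigr => i _.
    by rewrite mxE eqxx mulrC mul_mpolyC.
  rewrite mulr1 (bigD1 j) //= big1 ?addr0; first by rewrite mxE jj0 eqxx mulr1.
  by move=> i ij; rewrite mxE jj0 (negbTE ij) mulr0.
exists (\det N * (c j0)^-1%:MP).
have := congr1 determinant MT; rewrite !det_mulmx detT detD => detMT.
rewrite -[LHS]mulr1 -mpolyC1 -(divff cj0) mpolyCM mulrA detMT; ring.
Qed.

Lemma mpoly_dvd1 (F : fieldType) l (h : {mpoly F[l]}) :
  divides h 1 -> exists2 u, u != 0 & h = u%:MP.
Proof.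
move=> [E hE]; have /andP [/eqP hC hU] : h \in @mpoly_unit l F.
  by apply: (mpoly_intro_unit (q := E)); rewrite mulrC.
by exists h@_0; rewrite // -unitfE.
Qed.

Definition defining_poly (R : nzRingType) l n (a : 'I_n -> 'I_l -> R)
    (m : 'I_n -> nat) : {mpoly R[l]} :=
  \prod_(i < n) linform (a i) ^+ m i.

Definition nonproportional (R : nzRingType) l n (a : 'I_n -> 'I_l -> R) : Prop :=
  forall i k, i != k -> forall c, exists j, a k j != c * a i j.

Lemma eq_in_logder (K : nzRingType) l n (a : 'I_n -> 'I_l -> K) m f g :
  f =1 g -> in_logder a m f -> in_logder a m g.
Proof.
move=> fg fD i; have [q fq] := fD i; exists q; rewrite -fq.
by apply: eq_bigr => j _; rewrite fg.
Qed.

Section SaitoCriterion.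
Variables (F : fieldType) (l n : nat) (a : 'I_n -> 'I_l -> F) (m : 'I_n -> nat).
Variable piv : 'I_n -> 'I_l.
Hypotheses (a_piv : forall i, a i (piv i) != 0) (a_nonprop : nonproportional a).

Local Notation L i := (linform (a i)).
Local Notation Q := (defining_poly a m).
Local Notation res i := (restr (a i) (piv i)).

Lemma restr_linform_other i k : i != k -> res i (L k) != 0.
Proof.
move=> ik; rewrite restr_linform.
have [j akj] := a_nonprop ik (a k (piv i) / a i (piv i)).
by apply: (linform_neq0 (j := j)); rewrite subr_eq0.
Qed.

Lemma defining_poly_neq0 : Q != 0.
Proof.
by apply/prodf_neq0 => i _; rewrite expf_neq0 // (linform_neq0 (a_piv i)).
Qed.

Lemma defining_polyE i : Q = L i ^+ m i * \prod_(k | k != i) L k ^+ m k.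
Proof. by rewrite /defining_poly (bigD1 i). Qed.

Lemma restr_prod_other i (s : seq 'I_n) (P : pred 'I_n) t :
  (forall k, k \in s -> P k -> k != i) -> res i (\prod_(k <- s | P k) L k ^+ t k) != 0.
Proof.
move=> s_i; rewrite rmorph_prod prodf_seq_neq0; apply/allP => k ks /=.
apply/implyP => Pk; rewrite rmorphXn expf_neq0 // restr_linform_other //.
by rewrite eq_sym s_i.
Qed.

Lemma defining_poly_dvd D : (forall i, divides (L i ^+ m i) D) -> divides Q D.
Proof.
move=> LD; rewrite /defining_poly.
elim: (index_enum _) (index_enum_uniq 'I_n) => [|i s IHs] /=.
  by move=> _; exists D; rewrite big_nil mul1r.
move=> /andP [i_s us]; have [E DE] := IHs us.
have s_i k : k \in s -> true -> k != i by move=> ks _; apply: contraNneq i_s => <-.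
have [|q Eq] := linform_expdvd_cancel (t := m i) (E := E) (a_piv i) (restr_prod_other m s_i).
  by rewrite -DE; apply: LD.
by exists q; rewrite big_cons DE Eq mulrCA mulrA.
Qed.

Lemma defining_poly_dvd_det (M : 'M[{mpoly F[l]}]_l) :
  (forall k, in_logder a m (fun j => M k j)) -> divides Q (\det M).
Proof.
by move=> MD; apply: defining_poly_dvd => i; apply: linform_expdvd_det (a_piv i) _ => k; apply: MD.
Qed.

Lemma saito_generates (M : 'M[{mpoly F[l]}]_l) u :
  (forall k, in_logder a m (fun j => M k j)) -> u != 0 -> \det M = Q * u%:MP ->
  forall f, in_logder a m f -> exists g, forall j, f j = \sum_k g k * M k j.
Proof.
move=> MD u0 detM f fD.
pose Mf k : 'M[{mpoly F[l]}]_l := \matrix_(r, j) (if r == k then f j else M r j).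
have /fin_all_exists [h Mfh] : forall k, exists h, \det (Mf k) = Q * h.
  move=> k; apply: defining_poly_dvd_det => r i.
  have [->|rk] := eqVneq r k; [have [q fq] := fD i | have [q fq] := MD r i].
    by exists q; rewrite -fq; apply: eq_bigr => j _; rewrite mxE eqxx.
  by exists q; rewrite -fq; apply: eq_bigr => j _; rewrite mxE (negbTE rk).
have cramer j : \sum_k \det (Mf k) * M k j = \det M * f j.
  have := congr1 (fun X : 'M_(1, l) => X 0 j) (mulmxA (\row_j f j) (\adj M) M).
  rewrite mul_adj_mx mul_mx_scalar !mxE => ->; apply: eq_bigr => k _.
  rewrite (expand_det_row _ k) mxE; congr (_ * _); apply: eq_bigr => j' _.
  rewrite !mxE eqxx; congr (_ * (_ * _)); congr determinant.
  by apply/matrixP => x y; rewrite !mxE eq_sym (negbTE (neq_lift _ _)).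
exists (fun k => u^-1%:MP * h k) => j.
apply: (mulfI defining_poly_neq0); apply: (mulfI (_ : u%:MP != 0)); first by rewrite mpolyC_eq0.
rewrite mulrA (mulrC _ Q) -detM -cramer !mulr_sumr; apply: eq_bigr => k _.
rewrite Mfh; transitivity (Q * h k * M k j * (u * u^-1)%:MP).
  by rewrite divff // mulr1.
by rewrite mpolyCM; ring.
Qed.

(* Row j0 = piv i is Q d/dx_j0; row j <> j0 is Q' (d/dx_j - (a_ij / a_ij0) d/dx_j0)
   with Q' = Q / alpha_i^(m_i); the bracket kills alpha_i. *)
Lemma adapted_logder_mx i : exists N : 'M[{mpoly F[l]}]_l,
  (forall k, in_logder a m (fun j => N k j)) /\
  \det N = Q * (\prod_(k | k != i) L k ^+ m k) ^+ l.-1.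
Proof.
set Q' := \prod_(k | k != i) L k ^+ m k; set j0 := piv i.
pose T : 'M[F]_l := \matrix_(j, k) (if j == j0 then (k == j0)%:R
                      else (j == k)%:R - (k == j0)%:R * (a i j / a i j0)).
pose d := \row_j (if j == j0 then Q else Q').
exists (diag_mx d *m map_mx (@mpolyC l F) T); split => [j i'|].
  have -> : der_lin (fun k => (diag_mx d *m map_mx (@mpolyC l F) T) j k) (a i') =
            d 0 j * (\sum_k a i' k * T j k)%:MP.
    rewrite /der_lin raddf_sum mulr_sumr; apply: eq_bigr => k _.
    by rewrite mul_diag_mx !mxE /= mpolyCM -mul_mpolyC mulrCA.
  rewrite mxE; case: eqVneq => [_ | jj0].
    by rewrite (defining_polyE i'); eexists; rewrite -mulrA.
  have [<- | i'i] := eqVneq i i'.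
    suff -> : \sum_k a i k * T j k = 0 by exists 0; rewrite mulr0 mulr0.
    rewrite (bigD1 j) //= (bigD1 j0) 1?eq_sym //= big1 ?addr0.
      by rewrite !mxE (negbTE jj0) !eqxx /=; field.
    move=> k /andP [kj kj0]; rewrite mxE (negbTE jj0) (eq_sym j k) (negbTE kj).
    by rewrite (negbTE kj0) mul0r subr0 mulr0.
  by rewrite /Q' (bigD1 i') 1?eq_sym //=; eexists; rewrite -mulrA.
have detT : \det T = 1.
  rewrite (det_expand_pivot (j0 := j0)) => [|k kj0|x y]; rewrite !mxE ?eqxx //.
    by rewrite (negbTE kj0).
  rewrite eq_sym (negbTE (neq_lift _ _)) (inj_eq lift_inj) [lift j0 y == j0]eq_sym.
  by rewrite (negbTE (neq_lift _ _)) mul0r subr0.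
rewrite det_mulmx det_map_mx detT rmorph1 mulr1 det_diag (bigD1 j0) //= mxE eqxx.
have -> : l.-1 = #|predC1 j0| by rewrite cardC1 card_ord.
congr (_ * _); rewrite -prodr_const; apply: eq_bigr => j /negbTE jj0.
by rewrite mxE jj0.
Qed.

(* Expressing the rows of [adapted_logder_mx i] through M gives
   Q'^(l-1) = det G * h, and the restriction to H_i does not kill Q'. *)
Lemma restr_det_quotient_neq0 (M : 'M[{mpoly F[l]}]_l) h i :
  (forall f, in_logder a m f -> exists g, forall j, f j = \sum_k g k * M k j) ->
  \det M = Q * h -> res i h != 0.
Proof.
move=> M_gen detM; have [N [ND detN]] := adapted_logder_mx i.
have /fin_all_exists [G NG] : forall j, exists g, forall k, N j k = \sum_r g r * M r k.
  by move=> j; apply: M_gen; apply: ND.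
have NGM : N = \matrix_(j, r) G j r *m M.
  by apply/matrixP => j k; rewrite NG mxE; apply: eq_bigr => r _; rewrite mxE.
have := congr1 determinant NGM; rewrite detN det_mulmx detM mulrCA.
move=> /(mulfI defining_poly_neq0) /(congr1 (res i)); rewrite rmorphXn rmorphM /=.
apply: contra_eq_neq => ->; rewrite mulr0 expf_neq0 //.
by apply: restr_prod_other => k _; rewrite eq_sym.
Qed.

Lemma dvd1_of_restr_neq0 h (s : seq 'I_n) t :
  (forall i, res i h != 0) -> divides h (\prod_(i <- s) L i ^+ t i) -> divides h 1.
Proof.
move=> h_res; elim: s => [|i s IHs] [E hE]; first by exists E; rewrite -hE big_nil.
have [|q Eq] := linform_expdvd_cancel (t := t i) (E := E) (a_piv i) (h_res i).
  by rewrite -hE big_cons; eexists.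
apply: IHs; exists q; apply: (mulfI (expf_neq0 (t i) (linform_neq0 (a_piv i)))).
by move: hE; rewrite big_cons Eq => ->; ring.
Qed.

Lemma det_of_generating_rows (M : 'M[{mpoly F[l]}]_l) :
  (forall k, in_logder a m (fun j => M k j)) ->
  (forall f, in_logder a m f -> exists g, forall j, f j = \sum_k g k * M k j) ->
  exists2 u, u != 0 & \det M = Q * u%:MP.
Proof.
move=> MD M_gen; have [h detM] := defining_poly_dvd_det MD.
(* Q e_j lies in D(A, m), so Q^l = det G * Q * h: h divides a product of
   alpha_i's, none of which divides h. *)
have /fin_all_exists [G QG] : forall j, exists g,
    forall j', (j' == j)%:R * Q = \sum_k g k * M k j'.
  move=> j; apply: M_gen => i; rewrite (defining_polyE i).
  exists (a i j *: \prod_(k | k != i) L k ^+ m k).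
  rewrite /der_lin (bigD1 j) //= [X in _ + X]big1 ?addr0 => [|k /negbTE ->].
    by rewrite eqxx mul1r scalerAr.
  by rewrite mul0r scaler0.
have QGM : Q%:M = \matrix_(j, k) G j k *m M.
  apply/matrixP => j j'; rewrite !mxE eq_sym -mulr_natl QG.
  by apply: eq_bigr => k _; rewrite mxE.
have [|u u0 hu] := @mpoly_dvd1 _ _ h.
  apply: (dvd1_of_restr_neq0 (s := index_enum 'I_n) (t := fun i => (m i * l)%N)).
    by move=> i; apply: restr_det_quotient_neq0 M_gen detM.
  exists (\det (\matrix_(j, k) G j k) * Q).
  under eq_bigr do rewrite exprM.
  rewrite prodrXl -/(defining_poly a m) -det_scalar QGM det_mulmx detM; ring.
by exists u; rewrite // -hu.
Qed.

Lemma saito_free (e : 'I_l -> nat) (theta : 'I_l -> 'I_l -> {mpoly F[l]}) u :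
  (forall k, in_logder a m (theta k)) -> (forall k, homog_der (e k) (theta k)) ->
  u != 0 -> \det (\matrix_(k, j) theta k j) = Q * u%:MP -> free_with_exponents a m e.
Proof.
move=> thD th_hom u0 detM; set M := \matrix_(k, j) theta k j in detM.
have MD k : in_logder a m (fun j => M k j).
  by apply: eq_in_logder (thD k) => j; rewrite mxE.
exists theta; split=> //; split=> //; split=> [f fD | g thg].
  have [g fg] := saito_generates MD u0 detM fD.
  by exists g => j; rewrite fg; apply: eq_bigr => k _; rewrite mxE.
apply: (@rows_indep_of_det_neq0 _ _ M).
  by rewrite detM mulf_neq0 ?defining_poly_neq0 ?mpolyC_eq0.
by move=> j; rewrite -[RHS](thg j); apply: eq_bigr => k _; rewrite mxE.
Qed.

Lemma free_basis_det (e : 'I_l -> nat) : free_with_exponents a m e ->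
  exists theta : 'I_l -> 'I_l -> {mpoly F[l]},
    [/\ forall k, in_logder a m (theta k), forall k, homog_der (e k) (theta k) &
        exists2 u, u != 0 & \det (\matrix_(k, j) theta k j) = Q * u%:MP].
Proof.
move=> [theta [thD [th_hom [th_gen _]]]]; exists theta; split=> //.
apply: det_of_generating_rows => [k | f /th_gen [g fg]].
  by apply: eq_in_logder (thD k) => j; rewrite mxE.
by exists g => j; rewrite fg; apply: eq_bigr => k _; rewrite mxE.
Qed.

End SaitoCriterion.

Section ChangeOfScalars.
Variables (R S : comNzRingType) (f : {rmorphism R -> S}) (l n : nat).

Lemma map_linform (c : 'I_l -> R) :
  map_mpoly f (linform c) = linform (fun j => f (c j)).
Proof.
by rewrite /linform raddf_sum; apply: eq_bigr => j _; rewrite /= map_mpolyZ map_mpolyX.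
Qed.

Lemma map_defining_poly (a : 'I_n -> 'I_l -> R) m :
  map_mpoly f (defining_poly a m) = defining_poly (fun i j => f (a i j)) m.
Proof.
by rewrite rmorph_prod; apply: eq_bigr => i _; rewrite rmorphXn /= map_linform.
Qed.

Lemma map_in_logder (a : 'I_n -> 'I_l -> R) m (theta : 'I_l -> {mpoly R[l]}) :
  in_logder a m theta ->
  in_logder (fun i j => f (a i j)) m (fun j => map_mpoly f (theta j)).
Proof.
move=> thD i; have [q thq] := thD i; exists (map_mpoly f q).
rewrite -map_linform -rmorphXn -rmorphM -thq /der_lin raddf_sum.
by apply: eq_bigr => j _; rewrite /= map_mpolyZ.
Qed.

Lemma map_homog d (P : {mpoly R[l]}) : P \is d.-homog -> map_mpoly f P \is d.-homog.
Proof.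
move=> /dhomogP Phom; apply/dhomogP => mu; rewrite mcoeff_msupp mcoeff_map_mpoly => Pmu.
by apply: Phom; rewrite mcoeff_msupp; apply: contraNneq Pmu => ->; rewrite raddf0.
Qed.

Hypothesis f_inj : injective f.

Lemma map_mpoly_inj : injective (@map_mpoly l R S f).
Proof.
by move=> P P' PP'; apply/mpolyP => mu; apply: f_inj; rewrite -!mcoeff_map_mpoly PP'.
Qed.

Lemma homog_of_map d (P : {mpoly R[l]}) : map_mpoly f P \is d.-homog -> P \is d.-homog.
Proof.
move=> /dhomogP Phom; apply/dhomogP => mu Pmu; apply: Phom.
by rewrite (perm_mem (msupp_map_mpoly P f_inj)).
Qed.

End ChangeOfScalars.

Lemma clear_denominator l (P : {mpoly rat[l]}) :
  exists2 dP : int * {mpoly int[l]}, dP.1 != 0 & map_mpoly intr dP.2 = dP.1%:~R *: P.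
Proof.
elim/mpolyind: P => [|c mu P _ _ [[d P'] /= d0 P'E]].
  by exists (1, 0); rewrite //= raddf0 scaler0.
exists (d * denq c, (d * numq c) *: 'X_[mu] + denq c *: P'); first by rewrite mulf_neq0.
rewrite /= raddfD /= !map_mpolyZ map_mpolyX P'E scalerDr !scalerA !rmorphM /=.
by rewrite numqE; congr (_ *: _ + _ *: _); ring.
Qed.

Lemma clear_denominators l (I : finType) (P : I -> {mpoly rat[l]}) :
  exists2 d : int, d != 0 &
    exists P' : I -> {mpoly int[l]}, forall i, map_mpoly intr (P' i) = d%:~R *: P i.
Proof.
have /fin_all_exists2 [dP dP0 dPE] := fun i => clear_denominator (P i).
exists (\prod_i (dP i).1); first by apply/prodf_neq0 => i _.
exists (fun i => (\prod_(j | j != i) (dP j).1) *: (dP i).2) => i.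
by rewrite map_mpolyZ dPE scalerA -rmorphM [in RHS](bigD1 i) //= mulrC.
Qed.

Definition int_saito_data l n (a : 'I_n -> 'I_l -> int) (m : 'I_n -> nat)
    (e : 'I_l -> nat) (theta : 'I_l -> 'I_l -> {mpoly int[l]}) (d c : int) : Prop :=
  [/\ forall k, in_logder a m (theta k), forall k, homog_der (e k) (theta k) &
      d *: \det (\matrix_(k, j) theta k j) = c *: defining_poly a m].

Lemma free_of_int_saito_data (F : fieldType) l n (a : 'I_n -> 'I_l -> int) m e
    theta d c :
  int_saito_data a m e theta d c -> d%:~R != 0 :> F -> c%:~R != 0 :> F ->
  (forall i, exists j, (a i j)%:~R != 0 :> F) ->
  nonproportional (fun i j => (a i j)%:~R : F) ->
  free_with_exponents (fun i j => (a i j)%:~R : F) m e.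
Proof.
move=> [thD th_hom detth] d0 c0 /fin_all_exists [piv a_piv] a_np.
apply: (saito_free a_piv a_np (theta := fun k j => map_mpoly intr (theta k j))
          (u := c%:~R / d%:~R)) => [k | k j | |].
- exact: map_in_logder (thD k).
- exact: map_homog (th_hom k j).
- by rewrite mulf_neq0 ?invr_eq0.
apply: (@scalerI _ _ (d%:~R : F)) => //.
have -> : \matrix_(k, j) map_mpoly (intr : int -> F) (theta k j) =
          map_mx (map_mpoly (intr : int -> F)) (\matrix_(k, j) theta k j).
  by apply/matrixP => k j; rewrite !mxE.
rewrite det_map_mx -map_mpolyZ detth map_mpolyZ map_defining_poly.
by rewrite -!mul_mpolyC mulrCA -mpolyCM mulrCA divff // mulr1 mulrC.
Qed.

Lemma int_saito_data_of_free_rat l n (a : 'I_n -> 'I_l -> int) m e :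
  (forall i, exists j, a i j != 0) ->
  nonproportional (fun i j => (a i j)%:~R : rat) ->
  free_with_exponents (fun i j => (a i j)%:~R : rat) m e ->
  exists theta d c, [/\ d != 0, c != 0 & int_saito_data a m e theta d c].
Proof.
set aQ := fun i j => (a i j)%:~R : rat.
move=> /fin_all_exists [piv a_piv] a_np.
have aQ_piv i : aQ i (piv i) != 0 by rewrite intr_eq0.
move=> /(free_basis_det aQ_piv a_np) [th [thD th_hom [u u0 detth]]].
have /fin_all_exists [g thg] : forall ik : 'I_n * 'I_l, exists g,
    der_lin (th ik.2) (aQ ik.1) = linform (aQ ik.1) ^+ m ik.1 * g.
  by move=> [i k]; apply: thD.
pose P (x : 'I_l * 'I_l + 'I_n * 'I_l) :=
  match x with inl kj => th kj.1 kj.2 | inr ik => g ik end.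
have [r r0 [P' P'E]] := clear_denominators P.
pose Th k j := P' (inl (k, j)).
have ThE k j : map_mpoly intr (Th k j) = r%:~R *: th k j := P'E (inl (k, j)).
have map_inj := map_mpoly_inj (@intr_inj rat) (l := l).
exists Th, (denq u), (r ^+ l * numq u); split.
- exact: denq_neq0.
- by rewrite mulf_neq0 ?expf_neq0 ?numq_eq0.
split => [k i | k j |].
- exists (P' (inr (i, k))); apply: map_inj.
  rewrite rmorphM rmorphXn /= map_linform P'E /der_lin raddf_sum /=.
  under eq_bigr do rewrite map_mpolyZ ThE scalerA mulrC -scalerA.
  by rewrite -scaler_sumr -/(der_lin (th k) (aQ i)) (thg (i, k)) -scalerAr.
- by apply: (homog_of_map (@intr_inj rat)); rewrite ThE; apply/dhomogZ/th_hom.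
apply: map_inj; rewrite !map_mpolyZ map_defining_poly.
have -> : map_mpoly intr (\det (\matrix_(k, j) Th k j)) =
          \det ((r%:~R : rat)%:MP *: \matrix_(k, j) th k j).
  rewrite -det_map_mx; congr (\det _); apply/matrixP => k j.
  by rewrite !mxE mul_mpolyC; apply: ThE.
rewrite detZ detth -!mul_mpolyC !rmorphM rmorphXn /= numqE mpolyCM rmorphXn /=.
rewrite -/aQ; ring.
Qed.

Definition minor2 (R : comNzRingType) l n (a : 'I_n -> 'I_l -> R) i k j j' :=
  a i j * a k j' - a i j' * a k j.

Lemma rmorph_minor2 (R S : comNzRingType) (f : {rmorphism R -> S}) l n
    (a : 'I_n -> 'I_l -> R) i k j j' :
  minor2 (fun i j => f (a i j)) i k j j' = f (minor2 a i k j j').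
Proof. by rewrite /minor2 rmorphB !rmorphM. Qed.

Section Nonproportional.
Variables (R : comNzRingType) (l n : nat).
Implicit Types a : 'I_n -> 'I_l -> R.

Lemma nonproportional_of_fun_neq a :
  (forall i k, i != k -> forall c, (fun j => a i j) <> (fun j => c * a k j)) ->
  nonproportional a.
Proof.
move=> a_neq i k ik c.
have [/existsP // | /existsPn akc] := boolP [exists x, a k x != c * a i x].
case: (a_neq k i _ c); first by rewrite eq_sym.
by apply: functional_extensionality => j; apply/eqP; rewrite -[_ == _]negbK akc.
Qed.

Lemma nonproportional_of_minor2 a :
  (forall i k, i != k -> exists j j', minor2 a i k j j' != 0) -> nonproportional a.
Proof.
move=> a_minor i k ik c; have [j [j' mn0]] := a_minor i k ik.
have [/existsP // | /existsPn akc] := boolP [exists x, a k x != c * a i x].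
have akcE x : a k x = c * a i x by apply/eqP; rewrite -[_ == _]negbK akc.
suff mn_eq0 : minor2 a i k j j' = 0 by rewrite mn_eq0 eqxx in mn0.
by rewrite /minor2 !akcE; ring.
Qed.

End Nonproportional.

Lemma minor2_of_nonproportional (F : fieldType) l n (a : 'I_n -> 'I_l -> F) :
  (forall i, exists j, a i j != 0) -> nonproportional a ->
  forall i k, i != k -> exists j j', minor2 a i k j j' != 0.
Proof.
move=> a_piv a_np i k ik; have [j' aij'] := a_piv i.
have [j akj] := a_np i k ik (a k j' / a i j'); exists j, j'.
apply: contra akj => /eqP /subr0_eq mnE; apply/eqP; apply: (mulfI aij').
by rewrite mulrCA -mnE; field.
Qed.

Lemma int_minor2_of_nonproportional l n (a : 'I_n -> 'I_l -> int) :
  (forall i, exists j, a i j != 0) ->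
  nonproportional (fun i j => (a i j)%:~R : rat) ->
  exists J : 'I_n * 'I_n -> 'I_l * 'I_l,
    forall i k, i != k -> minor2 a i k (J (i, k)).1 (J (i, k)).2 != 0.
Proof.
move=> a_piv a_np.
have aQ_piv i : exists j, (a i j)%:~R != 0 :> rat.
  by have [j aj] := a_piv i; exists j; rewrite intr_eq0.
suff /fin_all_exists [J a_minor] : forall ik : 'I_n * 'I_n, exists jj : 'I_l * 'I_l,
    ik.1 != ik.2 -> minor2 a ik.1 ik.2 jj.1 jj.2 != 0.
  by exists J => i k; apply: (a_minor (i, k)).
move=> [i k]; have [j _] := a_piv i.
have [ik|] := boolP (i != k); last by exists (j, j).
have [j1 [j2 mn0]] := minor2_of_nonproportional aQ_piv a_np ik.
by exists (j1, j2) => _; rewrite -(intr_eq0 rat) -rmorph_minor2.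
Qed.

Lemma Fp_intr_neq0 p (z : int) : prime p -> z != 0 -> (`|z| < p)%N -> z%:~R != 0 :> 'F_p.
Proof.
move=> p_pr z0 zp; rewrite -(dvdz_pcharf (pchar_Fp p_pr)).
by apply: contraTN zp => /dvdn_leq; rewrite absz_gt0 z0 -leqNgt => /(_ isT).
Qed.

Unset Implicit Arguments.

Theorem theorem3p3 (l n : nat) (a : 'I_n -> 'I_l -> int) (m : 'I_n -> nat)
  (e : 'I_l -> nat) :
  (* no prime number divides any alpha_i *)
  (forall (i : 'I_n) (p : nat), prime p -> exists j : 'I_l, ~~ (p%:Z %| a i j)%Z) ->
  (* the hyperplanes H_i = alpha_i^{-1}(0) in Q^l are pairwise distinct *)
  (forall i j : 'I_n, i != j ->
     forall c : rat, (fun k => (a i k)%:~R : rat) <> (fun k => c * (a j k)%:~R)) ->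
  free_with_exponents (fun i k => (a i k)%:~R : rat) m e ->
  exists bad : seq nat, forall p : nat, prime p -> p \notin bad ->
    good_prime a p ->
    free_with_exponents (fun i k => (a i k)%:~R : 'F_p) m e.
Proof.
move=> a_prim a_dist freeQ.
have a_piv i : exists j, a i j != 0.
  by have [j aj] := a_prim i 2%N isT; exists j; apply: contraNneq aj => ->; rewrite dvdz0.
have aQ_np := nonproportional_of_fun_neq a_dist.
have [theta [d [c [d0 c0 model]]]] := int_saito_data_of_free_rat a_piv aQ_np freeQ.
have [J a_minor] := int_minor2_of_nonproportional a_piv aQ_np.
pose B := (`|d| + `|c| + \sum_ik `|minor2 a ik.1 ik.2 (J ik).1 (J ik).2|)%N.
exists (iota 0 B.+1) => p p_pr pB _.
have small_neq0 (z : int) : (`|z| <= B)%N -> z != 0 -> z%:~R != 0 :> 'F_p.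
  move=> zB z0; apply: Fp_intr_neq0 => //; apply: leq_ltn_trans zB _.
  by rewrite ltnNge; move: pB; rewrite mem_iota.
apply: (free_of_int_saito_data model).
- by apply: small_neq0; rewrite // /B; lia.
- by apply: small_neq0; rewrite // /B; lia.
- move=> i; have [j aj] := a_prim i p p_pr.
  by exists j; rewrite -(dvdz_pcharf (pchar_Fp p_pr)).
apply: nonproportional_of_minor2 => i k ik; exists (J (i, k)).1, (J (i, k)).2.
rewrite rmorph_minor2 small_neq0 ?a_minor //.
by rewrite /B (bigD1 (i, k)) //=; lia.
Qed.
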